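(* Let $g \in L^2(\mathbb{R})$ be a real-valued function with $\|g\|_2 = 1$. Let $\alpha = V_g g(0,1)$ and $$A = \begin{bmatrix} 1 & \alpha \\ \overline{\alpha} & 1 \end{bmatrix}, \qquad u(a,b) = \begin{bmatrix} V_g g(a,b) \\ V_g g(a, b-1)\end{bmatrix}, \qquad F(a,b) = \langle A^{-1} u(a,b), u(a,b)\rangle .$$ Then $F(a,b) = F(a, 1-b)$ for all $(a,b) \in \mathbb{Z}\times\mathbb{R}$ with $b \neq 1/2$, and $F(-a, 1/2) = F(a, 1/2)$ for all $a \in \mathbb{Z}$.
   Context: The short-time Fourier transform of $f \in L^2(\mathbb{R})$ with window $g\in L^2(\mathbb{R})$ is $V_g f(x,y) = \int_{\mathbb{R}} f(t)\overline{g(t-x)} e^{-2\pi i y t}\,dt$. The inner product on $\mathbb{C}^2$ is $\langle v, w\rangle = \sum_j v_j \overline{w_j}$. The matrix $A$ is the Gramian of $\{g, e^{2\pi i\cdot}g\}$, which are linearly independent, so $|\alpha|<1$ and $A$ is invertible. *)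

From mathcomp Require Import all_boot all_order all_algebra.
From mathcomp Require Import all_classical all_reals all_analysis.
From mathcomp Require Import complex.
Set Implicit Arguments. Unset Strict Implicit. Unset Printing Implicit Defensive.
Import Order.TTheory GRing.Theory Num.Theory.
Local Open Scope ring_scope.
Local Open Scope classical_set_scope.

(* Short-time Fourier transform V_g f (x,y) = \int f(t) conj(g(t-x)) e^{-2 pi i y t} dt,
   for REAL-valued f and g (the only case needed here). *)
Definition stft (R : realType) (g f : R -> R) (x y : R) : R[i] :=
  Complex
    (Rintegral (@lebesgue_measure R) setT
       (fun t => f t * g (t - x) * cos (2 * pi * y * t)))
    (- Rintegral (@lebesgue_measure R) setT
       (fun t => f t * g (t - x) * sin (2 * pi * y * t))).

Definition L2_unit (R : realType) (g : R -> R) : Prop :=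
  measurable_fun setT g /\
  (@lebesgue_measure R).-integrable setT (fun t => ((g t) ^+ 2)%:E) /\
  (\int[@lebesgue_measure R]_t ((g t) ^+ 2)%:E = 1)%E.

Definition cinner (R : realType) (v w : 'cV[R[i]]_2) : R[i] :=
  \sum_(j < 2) v j ord0 * conjc (w j ord0).

Definition alphaG (R : realType) (g : R -> R) : R[i] := stft g g 0 1.

Definition Amat (R : realType) (g : R -> R) : 'M[R[i]]_2 :=
  \matrix_(i < 2, j < 2)
     (if i == j then 1 else if (i == 0) then alphaG g else conjc (alphaG g)).

Definition uvec (R : realType) (g : R -> R) (a b : R) : 'cV[R[i]]_2 :=
  \col_(i < 2) (if i == 0 then stft g g a b else stft g g a (b - 1)).

Definition Ffun (R : realType) (g : R -> R) (a b : R) : R[i] :=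
  cinner (invmx (Amat g) *m uvec g a b) (uvec g a b).

(* For real g, V_g g(x, -y) is the complex conjugate of V_g g(x, y), so
   u(a, 1 - b) is u(a, b) with its two entries swapped and conjugated.  The
   Gramian A, hence A^-1, has equal diagonal entries, and such a Hermitian form
   is invariant under swapping and conjugating the entries.
   At b = 1/2 and a integer, the translation t -> t - a in the STFT integral
   gives V_g g(-a, +-1/2) = cos(pi a) V_g g(a, +-1/2), because e^(i pi a) = +-1
   is real; multiplying u by a unimodular scalar does not change the form. *)

From mathcomp Require Import all_boot all_order all_algebra.
From mathcomp Require Import all_classical all_reals all_analysis.
From mathcomp Require Import complex ring measurable_realfun.
Set Implicit Arguments. Unset Strict Implicit. Unset Printing Implicit Defensive.
Import Order.TTheory GRing.Theory Num.Theory.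
Local Open Scope ring_scope.
Local Open Scope classical_set_scope.

Section pushforward_integral.
Local Open Scope ereal_scope.
Context d1 d2 (X : measurableType d1) (Y : measurableType d2) (R : realType).
Variables (mu : {measure set X -> \bar R}) (phi : X -> Y).
Hypothesis mphi : measurable_fun setT phi.

Lemma integral_pushforwardT (f : Y -> \bar R) : measurable_fun setT f ->
  \int[pushforward mu phi]_y f y = \int[mu]_x f (phi x).
Proof.
move=> mf; rewrite (@integralE _ _ _ (pushforward mu phi)) [RHS]integralE.
rewrite -[fun x => f (phi x)]/(f \o phi).
rewrite (funepos_comp f phi) (funeneg_comp f phi).
rewrite !(ge0_integral_pushforward mphi) ?preimage_setT //.
- exact: measurable_funeneg.
- exact: measurable_funepos.
Qed.

End pushforward_integral.

Section translation_invariance.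
Variable R : realType.
Local Notation mu := (@lebesgue_measure R).

Lemma measurable_shift (c : R) :
  measurable_fun setT (shift c : measurableTypeR R -> measurableTypeR R).
Proof. exact: measurable_funD. Qed.

(* The casts select the sigma-algebra on which [lebesgue_measure] is defined. *)
Lemma lebesgue_measure_shift (c : R) (A : set (measurableTypeR R)) :
  measurable A ->
  pushforward mu (shift c : R -> measurableTypeR R) A = mu A.
Proof.
move=> mA; apply/esym/lebesgue_measure_unique => //=.
  exact: measurable_shift.
move=> _ _ [[a b]] _ <- /=; rewrite /pushforward.
have -> : +%R^~ c @^-1` `]a, b] = `]a - c, b - c].
  by apply/seteqP; split => x /=; rewrite !in_itv /= ltrBlDr lerBrDr.
rewrite !lebesgue_measure_itv /= !lte_fin ltrD2r; case: ifP => // _.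
by rewrite -!EFinD opprB addrA subrK.
Qed.

Lemma integral_shift (c : R) (f : R -> \bar R) : measurable_fun setT f ->
  (\int[mu]_x f (x + c)%R = \int[mu]_x f x)%E.
Proof.
move=> mf; rewrite -(integral_pushforwardT mu (measurable_shift c)) //.
apply: eq_measure_integral => [|ms A mA _].
- exact: measurable_shift.
- exact: lebesgue_measure_shift.
Qed.

Lemma Rintegral_shift (c : R) (f : R -> R) : measurable_fun setT f ->
  \int[mu]_x f (x + c) = \int[mu]_x f x.
Proof.
by move=> mf; congr fine; apply: integral_shift; exact/measurable_EFinP.
Qed.

End translation_invariance.

Section Rintegral_sign.
Context d (T : measurableType d) (R : realType).
Variables (mu : {measure set T -> \bar R}) (D : set T).

Lemma fineBC (x y : \bar R) : fine (y - x)%E = - fine (x - y)%E.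
Proof. by case: x y => [x||] [y||] /=; rewrite (opprB, oppr0). Qed.

(* No integrability is needed: when an integral is infinite or undefined,
   [fine] sends both sides to 0. *)
Lemma RintegralN (f : T -> R) :
  \int[mu]_(x in D) - f x = - \int[mu]_(x in D) f x.
Proof.
rewrite /Rintegral -[fun x => (- f x)%:E]/(\- (EFin \o f))%E.
by rewrite [in LHS]integralE [in RHS]integralE funeposN funenegN fineBC.
Qed.

Lemma RintegralZ_sign (e : R) (f : T -> R) : e ^+ 2 = 1 ->
  \int[mu]_(x in D) (e * f x) = e * \int[mu]_(x in D) f x.
Proof.
move/eqP; rewrite sqrf_eq1 => /orP[]/eqP ->.
- by rewrite mul1r; under eq_Rintegral do rewrite mul1r.
- by rewrite mulN1r -RintegralN; under eq_Rintegral do rewrite mulN1r.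
Qed.

End Rintegral_sign.

Section stft_symmetries.
Variable R : realType.
Local Notation mu := (@lebesgue_measure R).
Local Open Scope complex_scope.

Lemma stftN (g f : R -> R) x y : stft g f x (- y) = conjc (stft g f x y).
Proof.
rewrite /stft /=; congr Complex.
  by apply: eq_Rintegral => t _; rewrite mulrN mulNr cosN.
rewrite opprK -RintegralN; apply: eq_Rintegral => t _.
by rewrite mulrN mulNr sinN mulrN opprK.
Qed.

Lemma Rintegral_autocorrelation_oppx (g tr : R -> R) (x k e : R) :
    measurable_fun setT g -> measurable_fun setT tr -> e ^+ 2 = 1 ->
    (forall t, tr (k * t - k * x) = e * tr (k * t)) ->
  \int[mu]_t (g t * g (t - - x) * tr (k * t)) =
  e * \int[mu]_t (g t * g (t - x) * tr (k * t)).
Proof.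
move=> mg mtr e2 trB; rewrite -(Rintegral_shift (- x)); last first.
  apply: measurable_funM; first apply: measurable_funM => //.
  - exact: measurableT_comp mg (measurable_funD _ _).
  - exact: measurableT_comp mtr (measurable_funM _ _).
rewrite -RintegralZ_sign //; apply: eq_Rintegral => t _.
by rewrite opprK addrNK mulrDr mulrN trB; ring.
Qed.

Lemma stft_oppx (g : R -> R) x y : measurable_fun setT g ->
    sin (2 * pi * y * x) = 0 ->
  stft g g (- x) y = (cos (2 * pi * y * x))%:C * stft g g x y.
Proof.
move=> mg s0; set e := cos _.
have e2 : e ^+ 2 = 1 by rewrite -(cos2Dsin2 (2 * pi * y * x)) s0 expr0n addr0.
have mcos : measurable_fun setT (@cos R).
  by apply: continuous_measurable_fun; exact: continuous_cos.
have msin : measurable_fun setT (@sin R).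
  by apply: continuous_measurable_fun; exact: continuous_sin.
rewrite /stft (Rintegral_autocorrelation_oppx mg mcos e2); last first.
  by move=> t; rewrite cosB s0 mulr0 addr0 mulrC.
rewrite (Rintegral_autocorrelation_oppx mg msin e2) /=; last first.
  by move=> t; rewrite sinB s0 mulr0 subr0 mulrC.
by congr Complex; ring.
Qed.

End stft_symmetries.

Lemma big_ord2 (V : nmodType) (F : 'I_2 -> V) : \sum_(i < 2) F i = F 0 + F 1.
Proof.
by rewrite !big_ord_recl big_ord0 addr0; congr (F _ + F _); apply: val_inj.
Qed.

Lemma invmx_diag_eq (F : comUnitRingType) (M : 'M[F]_2) :
  M 0 0 = M 1 1 -> invmx M 0 0 = invmx M 1 1.
Proof.
move=> M00; rewrite /invmx; case: ifP => // _.
have [l0 l1] : lift 0 0 = 1 :> 'I_2 /\ lift 1 0 = 0 :> 'I_2.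
  by split; exact: val_inj.
rewrite !mxE /cofactor !det_mx11 !mxE l0 l1 M00.
by rewrite (_ : (0 + 0)%N = 0) // (_ : (1 %% 2 + 1 %% 2)%N = 2) // sqrrN expr1n.
Qed.

Section hermitian_form.
Variable R : realType.
Local Open Scope complex_scope.
Implicit Types (M : 'M[R[i]]_2) (x y k : R[i]).

Definition col2 x y : 'cV[R[i]]_2 := \col_(i < 2) (if i == 0 then x else y).

Lemma cinner_mulmx_col2 M x y : cinner (M *m col2 x y) (col2 x y) =
  (M 0 0 * x + M 0 1 * y) * conjc x + (M 1 0 * x + M 1 1 * y) * conjc y.
Proof. by rewrite /cinner big_ord2 !mxE !big_ord2 !mxE. Qed.

Lemma cinner_col2_swap_conj M x y : M 0 0 = M 1 1 ->
  cinner (M *m col2 (conjc y) (conjc x)) (col2 (conjc y) (conjc x)) =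
  cinner (M *m col2 x y) (col2 x y).
Proof. by rewrite !cinner_mulmx_col2 !conjcK => ->; ring. Qed.

Lemma cinner_col2Z M x y k : k * conjc k = 1 ->
  cinner (M *m col2 (k * x) (k * y)) (col2 (k * x) (k * y)) =
  cinner (M *m col2 x y) (col2 x y).
Proof.
by move=> kk; rewrite !cinner_mulmx_col2 !rmorphM -[RHS]mul1r -kk; ring.
Qed.

End hermitian_form.

Lemma sin_pi_int (R : realType) (a : int) : sin (pi * a%:~R) = 0 :> R.
Proof.
have sin_pi_nat (n : nat) : sin (pi * n%:R) = 0 :> R.
  by rewrite mulr_natr -[pi *+ n]add0r (alternatingn (@sinDpi R)) sin0 mulr0.
case: a => n; first exact: sin_pi_nat.
by rewrite NegzE mulrNz mulrN sinN sin_pi_nat oppr0.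
Qed.

Section Ffun_symmetries.
Variables (R : realType) (g : R -> R).
Local Open Scope complex_scope.

Lemma Ffun_reflect x b : Ffun g x (1 - b) = Ffun g x b.
Proof.
rewrite /Ffun /uvec.
have -> : 1 - b = - (b - 1) by rewrite opprB.
have -> : - (b - 1) - 1 = - b by ring.
rewrite !stftN; apply: cinner_col2_swap_conj.
by apply: invmx_diag_eq; rewrite !mxE.
Qed.

Lemma Ffun_half_oppz (a : int) : measurable_fun setT g ->
  Ffun g (- a%:~R) 2^-1 = Ffun g a%:~R 2^-1.
Proof.
move=> mg; pose c := cos (pi * a%:~R : R).
have sa := sin_pi_int R a.
have c2 : c ^+ 2 = 1 by rewrite -(cos2Dsin2 (pi * a%:~R)) sa expr0n addr0.
have half : 2 * pi * 2^-1 * a%:~R = pi * a%:~R :> R by field.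
have halfB : 2 * pi * (2^-1 - 1) * a%:~R = - (pi * a%:~R) :> R by field.
have V1 : stft g g (- a%:~R) 2^-1 = c%:C * stft g g a%:~R 2^-1.
  by rewrite (stft_oppx mg) half.
have V2 : stft g g (- a%:~R) (2^-1 - 1) = c%:C * stft g g a%:~R (2^-1 - 1).
  by rewrite (stft_oppx mg) halfB ?cosN // sinN sa oppr0.
rewrite /Ffun /uvec V1 V2; apply: cinner_col2Z.
by rewrite conjc_real -rmorphM /= -expr2 c2.
Qed.

End Ffun_symmetries.

Theorem lemma2p6 (R : realType) (g : R -> R) (hg : L2_unit g) :
  (forall (a : int) (b : R), b != 2^-1 ->
     Ffun g a%:~R b = Ffun g a%:~R (1 - b)) /\
  (forall a : int, Ffun g (- a%:~R) 2^-1 = Ffun g a%:~R 2^-1).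
Proof.
(* The reflection holds for every real b. *)
split=> [a b _|a]; first by rewrite Ffun_reflect.
exact: Ffun_half_oppz hg.1.
Qed.
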